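(* Let $\epsilon_0>0$, $\Omega_1,\Omega_2>0$, and $\lambda_k=d_k^\alpha$ with $0<d_1<d_2$, $\alpha>0$. For $\rho_1,\rho_2>0$ let $B=\frac{\epsilon_0}{\rho_2}$, $C=\frac{\epsilon_0}{\rho_1}$, $k=\frac{\epsilon_0\rho_2}{\rho_1}$. Then the problem $$\min_{\rho_1,\rho_2}\ 1-\frac{\lambda_2}{\lambda_2+k\lambda_1}e^{-\lambda_1C-(\lambda_2+k\lambda_1)B}\quad\text{s.t. } 0<\rho_1\le\Omega_1,\ 0<\rho_2\le\Omega_2$$ has optimal solution $$\rho_1=\Omega_1,\qquad \rho_2=\min\left(\Omega_2,\ \frac{\epsilon_0\lambda_1\lambda_2+\lambda_2\sqrt{4\Omega_1\lambda_1+\epsilon_0^2\lambda_1^2}}{2\lambda_1}\right).$$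
   Context: Interpretation: uplink two-user NOMA with target SNR $\epsilon_0$, where $\rho_1,\rho_2$ are the transmit SNRs of the nearer and farther user, constrained by maximum transmit SNRs $\Omega_1,\Omega_2$; the objective is the common outage probability when users are ordered correctly. *)

From Stdlib Require Import Reals.
Open Scope R_scope.

Definition outage (eps0 lam1 lam2 rho1 rho2 : R) : R :=
  let B := eps0 / rho2 in
  let C := eps0 / rho1 in
  let k := eps0 * rho2 / rho1 in
  1 - lam2 / (lam2 + k * lam1) * exp (- lam1 * C - (lam2 + k * lam1) * B).

Definition feasible (Om1 Om2 rho1 rho2 : R) : Prop :=
  0 < rho1 <= Om1 /\ 0 < rho2 <= Om2.

(* With B, C, k substituted, the outage probability is [1 - exp (- E)] for the
   exponent [E] below, so minimising the outage means minimising [E]. Every term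
   of [E] involving [rho1] decreases in [rho1], which forces [rho1 = Om1]. For
   [rho1 = Om1] the derivative of [E] in [rho2] has the sign of the quadratic
   [lam1 x^2 - eps0 lam1 lam2 x - Om1 lam2^2], negative below its positive root
   [r] and positive above it; hence [E] is unimodal in [rho2] and its minimum on
   [(0, Om2]] is attained at [Rmin Om2 r]. *)
From Stdlib Require Import Reals Lra Psatz.
From Coquelicot Require Import Coquelicot.
Open Scope R_scope.

(* Writing [b = a r - c / r], one gets
   [r (x - r) (a x^2 - b x - c) = (x - r)^2 (a r x + c)]. *)
Lemma mul_sub_root_quadratic_ge0 a b c r x :
  0 < a -> 0 <= c -> 0 < r -> a * r ^ 2 - b * r - c = 0 -> 0 <= x ->
  0 <= (x - r) * (a * x ^ 2 - b * x - c).
Proof.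
  intros ha hc hr hroot hx.
  assert (hfactor : r * ((x - r) * (a * x ^ 2 - b * x - c))
                    = (x - r) ^ 2 * (a * r * x + c)).
  { replace c with (a * r ^ 2 - b * r) at 1 2 by lra; ring. }
  apply (Rmult_le_reg_l r); [exact hr |].
  rewrite Rmult_0_r, hfactor.
  apply Rmult_le_pos; [apply pow2_ge_0 |].
  apply Rplus_le_le_0_compat; [apply Rmult_le_pos; nra | exact hc].
Qed.

Lemma le_at_Rmin_of_derive_sign (f f' : R -> R) (r M y : R) :
  0 < r ->
  (forall x, 0 < x -> derivable_pt_lim f x (f' x)) ->
  (forall x, 0 < x -> 0 <= (x - r) * f' x) ->
  0 < y <= M -> f (Rmin M r) <= f y.
Proof.
  intros hr hder hsign [hy hyM].
  set (s := Rmin M r).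
  assert (hs : 0 < s) by (apply Rmin_glb_lt; lra).
  assert (hsr : s <= r) by apply Rmin_r.
  destruct (Rtotal_order y s) as [hlt | [-> | hgt]].
  - destruct (MVT_cor2 f f' y s hlt (fun c hc => hder c ltac:(lra))) as [c [hmvt hc]].
    specialize (hsign c ltac:(lra)).
    assert (f' c <= 0) by nra.
    nra.
  - lra.
  - assert (hsr' : s = r).
    { destruct (Rle_or_lt r M) as [hrM | hMr]; [exact (Rmin_right M r hrM) |].
      unfold s in hgt; rewrite Rmin_left in hgt; lra. }
    destruct (MVT_cor2 f f' s y hgt (fun c hc => hder c ltac:(lra))) as [c [hmvt hc]].
    specialize (hsign c ltac:(lra)).
    assert (0 <= f' c) by nra.
    nra.
Qed.

Definition outage_exponent (eps0 lam1 lam2 rho1 rho2 : R) : R :=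
  ln (lam2 + eps0 * lam1 * rho2 / rho1) - ln lam2
  + lam2 * eps0 / rho2 + lam1 * eps0 / rho1 + lam1 * eps0 ^ 2 / rho1.

Lemma outageE eps0 lam1 lam2 rho1 rho2 :
  0 < eps0 -> 0 < lam1 -> 0 < lam2 -> 0 < rho1 -> 0 < rho2 ->
  outage eps0 lam1 lam2 rho1 rho2
  = 1 - exp (- outage_exponent eps0 lam1 lam2 rho1 rho2).
Proof.
  intros he h1 h2 hr1 hr2; unfold outage, outage_exponent; cbv zeta.
  assert (hk : 0 < eps0 * lam1 * rho2 / rho1)
    by (apply Rdiv_lt_0_compat; [apply Rmult_lt_0_compat; nra | lra]).
  set (K := lam2 + eps0 * lam1 * rho2 / rho1).
  replace (lam2 + eps0 * rho2 / rho1 * lam1) with K by (unfold K; field; lra).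
  replace (- (ln K - ln lam2 + lam2 * eps0 / rho2 + lam1 * eps0 / rho1
              + lam1 * eps0 ^ 2 / rho1))
    with (ln lam2 + - ln K + (- lam1 * (eps0 / rho1) - K * (eps0 / rho2)))
    by (unfold K; field; lra).
  rewrite !exp_plus, exp_Ropp, !exp_ln by (unfold K; lra).
  unfold Rdiv; ring.
Qed.

Lemma outage_le_of_exponent_le eps0 lam1 lam2 rho1 rho2 rho1' rho2' :
  0 < eps0 -> 0 < lam1 -> 0 < lam2 ->
  0 < rho1 -> 0 < rho2 -> 0 < rho1' -> 0 < rho2' ->
  outage_exponent eps0 lam1 lam2 rho1 rho2
    <= outage_exponent eps0 lam1 lam2 rho1' rho2' ->
  outage eps0 lam1 lam2 rho1 rho2 <= outage eps0 lam1 lam2 rho1' rho2'.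
Proof.
  intros he h1 h2 hr1 hr2 hr1' hr2' hE.
  rewrite !outageE by assumption.
  destruct hE as [hlt | ->]; [|lra].
  enough (exp (- outage_exponent eps0 lam1 lam2 rho1' rho2')
          < exp (- outage_exponent eps0 lam1 lam2 rho1 rho2)) by lra.
  apply exp_increasing; lra.
Qed.

Lemma outage_exponent_antitone_rho1 eps0 lam1 lam2 rho1 rho1' rho2 :
  0 < eps0 -> 0 < lam1 -> 0 < lam2 -> 0 < rho1 -> rho1 <= rho1' -> 0 < rho2 ->
  outage_exponent eps0 lam1 lam2 rho1' rho2
    <= outage_exponent eps0 lam1 lam2 rho1 rho2.
Proof.
  intros he h1 h2 hr1 hr1' hr2; unfold outage_exponent, Rdiv.
  assert (hinv : / rho1' <= / rho1) by (apply Rinv_le_contravar; lra).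
  assert (hinv0 : 0 < / rho1') by (apply Rinv_0_lt_compat; lra).
  assert (hln : ln (lam2 + eps0 * lam1 * rho2 * / rho1')
                <= ln (lam2 + eps0 * lam1 * rho2 * / rho1)).
  { apply ln_le.
    - assert (0 < eps0 * lam1 * rho2 * / rho1')
        by (repeat apply Rmult_lt_0_compat; lra).
      lra.
    - apply Rplus_le_compat_l, Rmult_le_compat_l; [|exact hinv].
      assert (0 < eps0 * lam1 * rho2) by (repeat apply Rmult_lt_0_compat; lra).
      lra. }
  assert (lam1 * eps0 * / rho1' <= lam1 * eps0 * / rho1)
    by (apply Rmult_le_compat_l; nra).
  assert (lam1 * eps0 ^ 2 * / rho1' <= lam1 * eps0 ^ 2 * / rho1)
    by (apply Rmult_le_compat_l; nra).
  lra.
Qed.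

Lemma is_derive_outage_exponent_rho2 eps0 lam1 lam2 Om1 x :
  0 < eps0 -> 0 < lam1 -> 0 < lam2 -> 0 < Om1 -> 0 < x ->
  is_derive (outage_exponent eps0 lam1 lam2 Om1) x
    (eps0 / (x ^ 2 * (lam2 * Om1 + eps0 * lam1 * x))
     * (lam1 * x ^ 2 - eps0 * lam1 * lam2 * x - Om1 * lam2 ^ 2)).
Proof.
  intros he h1 h2 hO hx; unfold outage_exponent.
  assert (0 < eps0 * lam1 * x) by (repeat apply Rmult_lt_0_compat; lra).
  assert (0 < eps0 * lam1 * x / Om1) by (apply Rdiv_lt_0_compat; lra).
  auto_derive.
  - repeat split; lra.
  - field; repeat split; nra.
Qed.

Definition rho2_opt (eps0 Om1 lam1 lam2 : R) : R :=
  (eps0 * lam1 * lam2 + lam2 * sqrt (4 * Om1 * lam1 + eps0 ^ 2 * lam1 ^ 2))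
  / (2 * lam1).

Lemma rho2_opt_gt0 eps0 Om1 lam1 lam2 :
  0 < eps0 -> 0 < lam1 -> 0 < lam2 -> 0 < rho2_opt eps0 Om1 lam1 lam2.
Proof.
  intros he h1 h2; unfold rho2_opt.
  assert (0 <= lam2 * sqrt (4 * Om1 * lam1 + eps0 ^ 2 * lam1 ^ 2))
    by (apply Rmult_le_pos; [lra | apply sqrt_pos]).
  assert (0 < eps0 * lam1 * lam2) by (repeat apply Rmult_lt_0_compat; lra).
  apply Rdiv_lt_0_compat; lra.
Qed.

Lemma rho2_opt_root eps0 Om1 lam1 lam2 (r := rho2_opt eps0 Om1 lam1 lam2) :
  0 < Om1 -> 0 < lam1 ->
  lam1 * r ^ 2 - eps0 * lam1 * lam2 * r - Om1 * lam2 ^ 2 = 0.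
Proof.
  intros hO h1; unfold r, rho2_opt.
  set (S := sqrt (4 * Om1 * lam1 + eps0 ^ 2 * lam1 ^ 2)).
  assert (hS : S * S = 4 * Om1 * lam1 + eps0 ^ 2 * lam1 ^ 2)
    by (apply sqrt_sqrt; nra).
  field_simplify; [| lra].
  replace (S ^ 2) with (S * S) by ring; rewrite hS; field; lra.
Qed.

Lemma outage_exponent_rho2_derive_sign eps0 lam1 lam2 Om1 x
    (r := rho2_opt eps0 Om1 lam1 lam2) :
  0 < eps0 -> 0 < lam1 -> 0 < lam2 -> 0 < Om1 -> 0 < x ->
  0 <= (x - r) * (eps0 / (x ^ 2 * (lam2 * Om1 + eps0 * lam1 * x))
                  * (lam1 * x ^ 2 - eps0 * lam1 * lam2 * x - Om1 * lam2 ^ 2)).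
Proof.
  intros he h1 h2 hO hx.
  assert (0 < lam2 * Om1 + eps0 * lam1 * x)
    by (apply Rplus_lt_0_compat; repeat apply Rmult_lt_0_compat; lra).
  assert (0 < eps0 / (x ^ 2 * (lam2 * Om1 + eps0 * lam1 * x)))
    by (apply Rdiv_lt_0_compat, Rmult_lt_0_compat; [| apply pow_lt |]; lra).
  rewrite <- Rmult_assoc, (Rmult_comm (x - r)), Rmult_assoc.
  apply Rmult_le_pos; [lra |].
  apply mul_sub_root_quadratic_ge0; try lra.
  - apply Rmult_le_pos; [lra | apply pow2_ge_0].
  - apply rho2_opt_gt0; lra.
  - apply rho2_opt_root; lra.
Qed.

Lemma outage_exponent_le_at_rho2_opt eps0 lam1 lam2 Om1 Om2 rho2 :
  0 < eps0 -> 0 < lam1 -> 0 < lam2 -> 0 < Om1 -> 0 < rho2 <= Om2 ->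
  outage_exponent eps0 lam1 lam2 Om1 (Rmin Om2 (rho2_opt eps0 Om1 lam1 lam2))
    <= outage_exponent eps0 lam1 lam2 Om1 rho2.
Proof.
  intros he h1 h2 hO hrho2.
  apply (le_at_Rmin_of_derive_sign _
           (fun x => eps0 / (x ^ 2 * (lam2 * Om1 + eps0 * lam1 * x))
                     * (lam1 * x ^ 2 - eps0 * lam1 * lam2 * x - Om1 * lam2 ^ 2)));
    [apply rho2_opt_gt0; lra | | | exact hrho2].
  - intros x hx; apply is_derive_Reals, is_derive_outage_exponent_rho2; lra.
  - intros x hx; apply outage_exponent_rho2_derive_sign; lra.
Qed.

Theorem corollary3 (eps0 Om1 Om2 d1 d2 alpha : R) :
  0 < eps0 -> 0 < Om1 -> 0 < Om2 -> 0 < d1 -> d1 < d2 -> 0 < alpha ->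
  let lam1 := Rpower d1 alpha in
  let lam2 := Rpower d2 alpha in
  let rho1s := Om1 in
  let rho2s := Rmin Om2
      ((eps0 * lam1 * lam2 + lam2 * sqrt (4 * Om1 * lam1 + eps0 ^ 2 * lam1 ^ 2))
       / (2 * lam1)) in
  feasible Om1 Om2 rho1s rho2s /\
  forall rho1 rho2, feasible Om1 Om2 rho1 rho2 ->
    outage eps0 lam1 lam2 rho1s rho2s <= outage eps0 lam1 lam2 rho1 rho2.
Proof.
  intros he hO1 hO2 _ _ _ lam1 lam2 rho1s rho2s.
  assert (h1 : 0 < lam1) by apply exp_pos.
  assert (h2 : 0 < lam2) by apply exp_pos.
  change rho2s with (Rmin Om2 (rho2_opt eps0 Om1 lam1 lam2)) in *.
  assert (hrho2s : 0 < Rmin Om2 (rho2_opt eps0 Om1 lam1 lam2) <= Om2).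
  { split; [apply Rmin_glb_lt; [lra | apply rho2_opt_gt0; lra] | apply Rmin_l]. }
  split; [unfold feasible, rho1s; lra |].
  intros rho1 rho2 [[hr1 hr1O] hr2].
  unfold rho1s; apply outage_le_of_exponent_le; try lra.
  apply Rle_trans with (outage_exponent eps0 lam1 lam2 Om1 rho2).
  - apply outage_exponent_le_at_rho2_opt; lra.
  - apply outage_exponent_antitone_rho1; lra.
Qed.
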